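(* Let $k\ge 2$, $n\ge 3$, $M=\{0,1,\dots,k-1\}$, and consider the positions $p\in M^n$ with the moves and the notation $B(p)$, $\bar x$, $T(m;j_1,\dots,j_{n-m})$ described in the context. (1) $M^n$ is the disjoint union of the trivial classes $(m)=\{p: |B(p)|=m\}$, $0\le m\le n$. (2) The sets $T(m;j_1,\dots,j_{n-m})$, for $1\le m\le n$ and integers $1\le j_1\le\dots\le j_{n-m}\le\lfloor (k-1)/2\rfloor$, are pairwise disjoint and cover all external positions. If it is not the case that ($m=1$ and $j_1<j_2<\dots<j_{n-1}<(k-1)/2$), then $T(m;j_1,\dots,j_{n-m})$ is exactly one connectivity class. If $m=1$ and $j_1<j_2<\dots<j_{n-1}<(k-1)/2$ (here $(k-1)/2$ need not be an integer), then $T(1;j_1,\dots,j_{n-1})$ is the union of exactly two connectivity classes: the set of its positions connected to $(0,j_1,\dots,j_{n-1})$, and the set of its positions not connected to it (which contains $(k-1,j_1,\dots,j_{n-1})$). Moreover, integers $1\le j_1<\dots<j_{n-1}<(k-1)/2$ exist only if $k\ge 2n$.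
   Context: Fix integers $k\ge 2$ (edge length) and $n\ge 3$ (dimension), $M=\{0,\dots,k-1\}$. A position is $p=(p_1,\dots,p_n)\in M^n$; the cubie in position $p$ occupies $\prod_i[p_i,p_i+1]\subset[0,k]^n$. Let $B(p)=\{i: p_i\in\{0,k-1\}\}$; $p$ is external if $B(p)\neq\emptyset$. For distinct $i,j\in\{1,\dots,n\}$ define $\psi_{i,j}:M^n\to M^n$ by $(\psi_{i,j}p)_i=k-1-p_j$, $(\psi_{i,j}p)_j=p_i$, $(\psi_{i,j}p)_l=p_l$ for $l\notin\{i,j\}$. A move is given by distinct $i,j$ and constants $c_l\in M$ ($l\notin\{i,j\}$): it sends every position $p$ with $p_l=c_l$ for all $l\notin\{i,j\}$ to $\psi_{i,j}(p)$ and fixes all other positions (rotation of a 2-dimensional layer; rotations of higher-dimensional layers are compositions of such moves). A combination is a finite sequence of moves, regarded as the composite permutation of $M^n$. Two positions are connected if some combination sends one to the other; connectivity classes are the resulting equivalence classes. For $x\in\{1,\dots,k-2\}$ put $\bar x=\min(x,k-1-x)$. For $1\le m\le n$ and $1\le j_1\le\dots\le j_{n-m}\le\lfloor (k-1)/2\rfloor$, $T(m;j_1,\dots,j_{n-m})$ is the set of positions $p$ with $|B(p)|=m$ such that the multiset $\{\bar p_i: i\notin B(p)\}$ equals $\{j_1,\dots,j_{n-m}\}$ (for $m=n$ the list is empty and $T$ is the set of all $p$ with $|B(p)|=n$). *)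

From mathcomp Require Import all_boot.
Set Implicit Arguments. Unset Strict Implicit. Unset Printing Implicit Defensive.

Section Cube.
Variables k n : nat.

(* A position p in M^n, M = {0,...,k-1}; coordinates indexed by 'I_n
   (coordinate i of the paper is index i-1 here). *)
Definition pos := {ffun 'I_n -> 'I_k}.

Definition psi (i j : 'I_n) (p : pos) : pos :=
  [ffun l => if l == i then rev_ord (p j) else if l == j then p i else p l].

(* A move: (i, j, c) with i != j; only the values c l for l \notin {i,j}
   matter. *)
Definition move := ('I_n * 'I_n * pos)%type.

Definition move_ok (mv : move) : bool := mv.1.1 != mv.1.2.

Definition apply_move (mv : move) (p : pos) : pos :=
  let: (i, j, c) := mv in
  if [forall l, ((l != i) && (l != j)) ==> (p l == c l)] then psi i j p else p.

Definition apply_comb (s : seq move) (p : pos) : pos :=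
  foldl (fun x mv => apply_move mv x) p s.

Definition connected (p q : pos) : Prop :=
  exists s : seq move, all move_ok s /\ apply_comb s p = q.

Definition Bset (p : pos) : {set 'I_n} :=
  [set i | (val (p i) == 0) || (val (p i) == k.-1)].

Definition external (p : pos) : bool := Bset p != set0.

Definition bar (x : nat) : nat := minn x (k.-1 - x).

Definition barseq (p : pos) : seq nat :=
  [seq bar (val (p i)) | i <- [seq i <- enum 'I_n | i \notin Bset p]].

Definition trivclass (m : nat) : {set pos} := [set p | #|Bset p| == m].

Definition Tset (m : nat) (js : seq nat) : {set pos} :=
  [set p | (#|Bset p| == m) && perm_eq (barseq p) js].

Definition Tparams (m : nat) (js : seq nat) : bool :=
  [&& 1 <= m <= n, size js == n - m, sorted leq js &
      all (fun j => 1 <= j <= (k.-1)./2) js].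

Definition Tspecial (m : nat) (js : seq nat) : bool :=
  [&& m == 1, sorted ltn js & all (fun j => j.*2 < k.-1) js].

End Cube.

From mathcomp Require Import all_boot all_fingroup zify.
Set Implicit Arguments. Unset Strict Implicit. Unset Printing Implicit Defensive.

(* A move acts on a single position as psi i j = flip i \o swap i j, where flip i
   reflects coordinate i and swap i j exchanges two coordinates.  Flips and swaps
   generate the hyperoctahedral group, and moves realise its even words (odd ones
   up to a single flip).  The multiset of the bars of the coordinates (the profile)
   is invariant, the group is transitive on each profile class, and the T-sets are
   exactly the profile classes containing a bar 0.  If an odd word fixes p (two
   equal bars, or a bar equal to (k-1)/2), the whole profile class of p is connected.
   Otherwise the class splits in two, separated by the orientation: the parity of
   the permutation sorting the bars plus that of the number of coordinates in the
   upper half, which moves preserve and flips change. *)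

Lemma perm_map_enum (T : finType) (s : {perm T}) : perm_eq [seq s x | x <- enum T] (enum T).
Proof.
apply: uniq_perm; rewrite ?(map_inj_uniq (@perm_inj _ s)) ?enum_uniq // => x.
by rewrite mem_enum -[x](permKV s) map_f ?mem_enum.
Qed.

Lemma perm_nseq_cat (T : eqType) (x : T) a b s t : x \notin s -> x \notin t ->
  perm_eq (nseq a x ++ s) (nseq b x ++ t) = (a == b) && perm_eq s t.
Proof.
move=> s_x t_x; apply/idP/andP => [eq_st | [/eqP <-]]; last by rewrite perm_cat2l.
have eq_ab : a = b.
  move/seq.permP/(_ (pred1 x)): eq_st.
  by rewrite !count_cat !count_nseq /= eqxx !mul1n (count_memPn s_x) (count_memPn t_x) !addn0.
by move: eq_st; rewrite eq_ab perm_cat2l eqxx.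
Qed.

Lemma special_params_bound k n (js : seq nat) : 1 < n -> size js = n.-1 -> uniq js ->
  all (fun j => 1 <= j) js -> all (fun j => j.*2 < k.-1) js -> n.*2 <= k.
Proof.
move=> lt1n size_js uniq_js /allP js_pos /allP js_small.
have : size js <= size (iota 1 ((k.-2)./2)).
  apply: (uniq_leq_size uniq_js) => j j_js; rewrite mem_iota js_pos //=.
  by have := js_small j j_js; lia.
by rewrite size_iota size_js; lia.
Qed.

Section Cube.
Variables k n : nat.
Local Notation pos := (pos k n).
Local Notation bar := (bar k).
Implicit Types (p q : pos) (i j l : 'I_n).

Lemma bar_rev (x : 'I_k) : bar (rev_ord x) = bar x.
Proof. by rewrite /bar /=; have := ltn_ord x; lia. Qed.

Lemma bar_id x : x.*2 <= k.-1 -> bar x = x.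
Proof. by rewrite /bar; lia. Qed.

Lemma bar_le_half (x : 'I_k) : bar x <= (k.-1)./2.
Proof. by rewrite geq_half_double /bar; have := ltn_ord x; lia. Qed.

Lemma bar_eq_rev (x y : 'I_k) : bar x = bar y -> x != y -> y = rev_ord x.
Proof.
move=> eq_bar neq_xy; apply: val_inj; move: eq_bar neq_xy.
by rewrite /bar -val_eqE /=; have := ltn_ord x; have := ltn_ord y; lia.
Qed.

Lemma mem_Bset p i : (i \in Bset p) = (bar (p i) == 0).
Proof. by rewrite inE /bar /=; have := ltn_ord (p i); lia. Qed.

Definition flip i p : pos := [ffun l => if l == i then rev_ord (p l) else p l].
Definition swap i j p : pos := [ffun l => p (tperm i j l)].

Lemma flipK i : involutive (flip i).
Proof. by move=> p; apply/ffunP => l; rewrite !ffunE; case: eqP => // ->; rewrite rev_ordK. Qed.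

Lemma swap_id i p : swap i i p = p.
Proof. by apply/ffunP => l; rewrite ffunE tperm1 perm1. Qed.

Lemma psiE i j p : psi i j p = flip i (swap i j p).
Proof.
apply/ffunP => l; rewrite !ffunE.
by case: tpermP => [->|->|/eqP/negbTE -> /eqP/negbTE ->]; rewrite ?eqxx //; case: eqP => [->|].
Qed.

Lemma flip_swap_flip i j p : i != j -> flip i (swap i j (flip j p)) = swap i j p.
Proof.
move=> neq_ij; apply/ffunP => l; rewrite !ffunE.
case: (eqVneq l i) => [->|neq_li]; first by rewrite tpermL eqxx rev_ordK.
case: tpermP => [eq_li | _ | _ /eqP/negbTE ->] //; last by rewrite (negbTE neq_ij).
by rewrite eq_li eqxx in neq_li.
Qed.

Lemma psi_psi i j p : i != j -> psi i j (psi i j p) = flip i (flip j p).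
Proof.
move=> neq_ij; have neq_ji := neq_ij; rewrite eq_sym in neq_ji.
apply/ffunP => l; rewrite !ffunE.
have [->|neq_li] := eqVneq l i; first by rewrite eqxx (negbTE neq_ij) (negbTE neq_ji).
by have [->|neq_lj] := eqVneq l j; rewrite ?eqxx ?(negbTE neq_ji) ?(negbTE neq_li).
Qed.

Lemma connected_refl p : connected p p.
Proof. by exists [::]. Qed.

Lemma connected_trans p q r : connected p q -> connected q r -> connected p r.
Proof.
move=> [s1 [ok1 <-]] [s2 [ok2 <-]]; exists (s1 ++ s2).
by rewrite all_cat ok1 ok2 /apply_comb foldl_cat.
Qed.

Lemma connected_psi i j p : i != j -> connected p (psi i j p).
Proof.
move=> neq_ij; exists [:: (i, j, p)]; split; first by rewrite /= andbT.
by rewrite /apply_comb /= ifT //; apply/forallP => l; apply/implyP.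
Qed.

Lemma connected_flip2 i j p : connected p (flip i (flip j p)).
Proof.
have [<-|neq_ij] := eqVneq i j; first by rewrite flipK; exact: connected_refl.
rewrite -psi_psi //; exact: connected_trans (connected_psi _ neq_ij) (connected_psi _ neq_ij).
Qed.

Lemma connected_ind (P : pos -> Prop) p :
  P p -> (forall q i j, i != j -> P q -> P (psi i j q)) ->
  forall q, connected p q -> P q.
Proof.
move=> Pp Ppsi _ [s [+ <-]]; elim/last_ind: s => // s mv IH.
rewrite all_rcons /apply_comb foldl_rcons => /andP [ok_mv /IH].
case: mv ok_mv => [[i j] c] /= neq_ij; case: ifP => // _; exact: Ppsi.
Qed.

Inductive op := Flip of 'I_n | Swap of 'I_n & 'I_n.

Definition act_op o p := match o with Flip i => flip i p | Swap i j => swap i j p end.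
Definition odd_op o := match o with Flip _ => true | Swap i j => i != j end.
Definition act (w : seq op) p := foldl (fun q o => act_op o q) p w.
Definition odd_word w := odd (count odd_op w).

Lemma act_cat w1 w2 p : act (w1 ++ w2) p = act w2 (act w1 p).
Proof. exact: foldl_cat. Qed.

Lemma odd_word_cat w1 w2 : odd_word (w1 ++ w2) = odd_word w1 (+) odd_word w2.
Proof. by rewrite /odd_word count_cat oddD. Qed.

(* Even words are products of moves psi i j = flip i \o swap i j and of pairs of
   flips, each of which is two moves. *)
Lemma connected_act w p :
  if odd_word w then forall i, connected p (flip i (act w p)) else connected p (act w p).
Proof.
elim/last_ind: w => [|w o IH]; first exact: connected_refl.
rewrite -cats1 odd_word_cat act_cat; set q := act w p; case: o => [x | x y] /=.
  case: (odd_word w) IH => /= conn_q; first exact: conn_q.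
  by move=> i; apply: connected_trans conn_q (connected_flip2 i x _).
rewrite /odd_word /=; have [<-|neq_xy] := eqVneq x y; first by rewrite addbF swap_id.
rewrite addbT -/(odd_word w); case: (odd_word w) IH => /= conn_q.
  rewrite -(flip_swap_flip q neq_xy) -psiE.
  exact: connected_trans (conn_q y) (connected_psi _ neq_xy).
move=> i; apply: connected_trans conn_q _; rewrite -[swap x y q](flipK x) -psiE.
exact: connected_trans (connected_psi _ neq_xy) (connected_flip2 _ _ _).
Qed.

Definition profile p := [seq bar (p l) | l <- enum 'I_n].

Lemma profile_flip i p : profile (flip i p) = profile p.
Proof. by apply: eq_map => l; rewrite ffunE; case: ifP => // _; rewrite bar_rev. Qed.


Lemma perm_profile_swap i j p : perm_eq (profile (swap i j p)) (profile p).
Proof.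
rewrite /profile (eq_map (g := (fun l => bar (p l)) \o tperm i j)) => [|l]; last by rewrite ffunE.
by rewrite map_comp perm_map ?perm_map_enum.
Qed.

Lemma perm_profile_psi i j p : perm_eq (profile (psi i j p)) (profile p).
Proof. by rewrite psiE profile_flip perm_profile_swap. Qed.

Lemma perm_profile_act w p : perm_eq (profile (act w p)) (profile p).
Proof.
elim: w p => //= o w IH p; apply: perm_trans (IH _) _.
by case: o => [i | i j] /=; rewrite ?profile_flip ?perm_profile_swap.
Qed.

Lemma connected_profile p q : connected p q -> perm_eq (profile p) (profile q).
Proof.
apply: (@connected_ind (fun q => perm_eq (profile p) (profile q))) => // r i j _ eq_pr.
by apply: perm_trans eq_pr _; rewrite perm_sym perm_profile_psi.
Qed.

Lemma count_profile p c : count_mem c (profile p) = #|[set l | bar (p l) == c]|.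
Proof. by rewrite count_map enumT cardE /enum_mem size_filter; apply: eq_count => l; rewrite /= inE. Qed.

Lemma act_fix_coord p q i : perm_eq (profile p) (profile q) -> p i != q i ->
  exists w, act w p i = q i /\ forall l, p l = q l -> act w p l = q l.
Proof.
move=> eq_pq neq_i; set c := bar (q i).
have /existsP [j /andP [/eqP bar_j neq_j]] : [exists j, (bar (p j) == c) && (p j != q j)].
  apply: contraT; rewrite negb_exists => /forallP agree.
  (* otherwise bar (q i) would occur less often in the profile of p than in that of q *)
  have : #|[set l | bar (p l) == c]| < #|[set l | bar (q l) == c]|.
    apply: proper_card; apply/properP; split.
      apply/subsetP => l; rewrite !inE => bar_l.
      by move: (agree l); rewrite bar_l negbK => /eqP <-.
    exists i; rewrite !inE ?eqxx //; apply: contraNN neq_i => bar_i.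
    by move: (agree i); rewrite bar_i negbK.
  by move/seq.permP: eq_pq => eq_count; rewrite -!count_profile eq_count ltnn.
exists (Swap i j :: (if p j == q i then [::] else [:: Flip i])); split => [|l eq_l].
  have swap_i : swap i j p i = p j by rewrite ffunE tpermL.
  case: eqP => [<- //|/eqP neq_ji] /=; rewrite ffunE eqxx swap_i.
  by rewrite (bar_eq_rev bar_j neq_ji).
have [neq_li neq_lj] : l != i /\ l != j.
  by split; apply/eqP => eq_l'; [move: neq_i | move: neq_j]; rewrite -eq_l' eq_l eqxx.
have swap_l : swap i j p l = q l by rewrite ffunE tpermD // eq_sym.
by case: ifP => _ //=; rewrite ffunE (negbTE neq_li) swap_l.
Qed.

Lemma act_of_perm_profile p q : perm_eq (profile p) (profile q) -> exists w, act w p = q.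
Proof.
have [d] := ubnP #|[set l | p l != q l]|; elim: d p => // d IH p.
rewrite ltnS => le_d eq_pq.
case: (pickP (fun l => p l != q l)) => [i neq_i | agree]; last first.
  by exists [::]; apply/ffunP => l; apply/eqP; rewrite -[_ == _]negbK agree.
have [w [fix_i keep]] := act_fix_coord eq_pq neq_i.
have [w' <-] : exists w', act w' (act w p) = q.
  apply: IH; last exact: perm_trans (perm_profile_act w p) eq_pq.
  apply: leq_trans le_d; apply: proper_card; apply/properP; split.
    by apply/subsetP => l; rewrite !inE; apply: contraNN => /eqP /keep ->.
  by exists i; rewrite !inE ?fix_i ?eqxx.
by exists (w ++ w'); rewrite act_cat.
Qed.

Definition rigid p := uniq (profile p) && all (fun c => c.*2 != k.-1) (profile p).

Lemma rigid_perm p q : perm_eq (profile p) (profile q) -> rigid p = rigid q.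
Proof. by move=> eq_pq; rewrite /rigid (perm_uniq eq_pq) (perm_all _ eq_pq). Qed.

Lemma rigid_inj p : rigid p -> injective (fun l => bar (p l)).
Proof. by case/andP => /injectiveP. Qed.

Lemma rigid_nomid p l : rigid p -> (bar (p l)).*2 != k.-1.
Proof. by case/andP => _ /allP; apply; apply/mapP; exists l; rewrite ?mem_enum. Qed.

Lemma odd_stabilizer p : ~~ rigid p -> exists2 w, odd_word w & act w p = p.
Proof.
rewrite negb_and => /orP [/injectivePn [i [j neq_ij /= bar_ij]] | /allPn [c /mapP [l _ ->]] /negPn /eqP mid_l].
  have [eq_ij | neq_pij] := eqVneq (p i) (p j).
    exists [:: Swap i j]; rewrite /odd_word /= ?neq_ij //.
    by apply/ffunP => l; rewrite ffunE; case: tpermP => [->|->|//]; rewrite eq_ij.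
  have rev_ij := bar_eq_rev bar_ij neq_pij.
  exists [:: Flip i; Flip j; Swap i j]; rewrite /odd_word /= ?neq_ij //.
  apply/ffunP => l; rewrite !ffunE; have neq_ji := neq_ij; rewrite eq_sym in neq_ji.
  case: tpermP => [->|->|/eqP/negbTE-> /eqP/negbTE->] //;
    by rewrite eqxx ?(negbTE neq_ij) ?(negbTE neq_ji) ?rev_ij ?rev_ordK.
exists [:: Flip l] => //.
apply/ffunP => x; rewrite ffunE /=; case: eqP => // ->; apply: val_inj => /=.
by move: mid_l; rewrite /bar; have := ltn_ord (p l); lia.
Qed.

Lemma connected_of_profile p q :
  ~~ rigid p -> perm_eq (profile p) (profile q) -> connected p q.
Proof.
move=> /odd_stabilizer [s odd_s fix_s] /act_of_perm_profile [w <-].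
case odd_w: (odd_word w) (connected_act w p) => // _.
by have := connected_act (s ++ w) p; rewrite odd_word_cat odd_s odd_w act_cat fix_s.
Qed.

Lemma connected_or_flip p q i :
  perm_eq (profile p) (profile q) -> connected p q \/ connected (flip i p) q.
Proof.
move=> /act_of_perm_profile [w <-].
case odd_w: (odd_word w) (connected_act w p) => conn; [right | by left].
by have := connected_act ([:: Flip i] ++ w) (flip i p); rewrite odd_word_cat odd_w act_cat /= flipK.
Qed.

Definition rank (f : 'I_n -> nat) a := #|[set b | f b < f a]|.

Lemma rank_lt f a : rank f a < n.
Proof.
rewrite -[n]card_ord -cardsT; apply: proper_card; apply/properP.
by split; [exact: subsetT | exists a; rewrite ?inE ?ltnn].
Qed.

Lemma rank_mono f a b : f a < f b -> rank f a < rank f b.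
Proof.
move=> lt_ab; apply: proper_card; apply/properP; split.
  by apply/subsetP => x; rewrite !inE => /ltn_trans; apply.
by exists a; rewrite !inE ?ltnn.
Qed.

Lemma rank_inj f : injective f -> injective (rank f).
Proof.
move=> inj_f a b eq_ab; apply: inj_f.
by have [/rank_mono|/rank_mono|//] := ltngtP (f a) (f b); rewrite eq_ab ltnn.
Qed.

(* The identity when f is not injective. *)
Definition sort_perm f : {perm 'I_n} :=
  odflt 1%g [pick s : {perm 'I_n} | [forall a, val (s a) == rank f a]].

Lemma sort_permE f : injective f -> forall a, val (sort_perm f a) = rank f a.
Proof.
move=> /rank_inj inj_rank.
have inj_ord : injective (fun a => Ordinal (rank_lt f a)) by move=> a b /(congr1 val) /inj_rank.
rewrite /sort_perm; case: pickP => [s /forallP spec a | none]; first exact/eqP/spec.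
suff: [forall a, val (perm inj_ord a) == rank f a] by rewrite none.
by apply/forallP => a; rewrite permE.
Qed.

Lemma sort_perm_ext f g : f =1 g -> sort_perm f = sort_perm g.
Proof.
move=> eq_fg; congr odflt; apply: eq_pick => s; apply: eq_forallb => a.
by congr (_ == _); apply: eq_card => b; rewrite !inE !eq_fg.
Qed.

Lemma sort_perm_tperm f i j :
  injective f -> sort_perm (f \o tperm i j) = (tperm i j * sort_perm f)%g.
Proof.
move=> inj_f; apply/permP => a; apply: val_inj.
rewrite permM !sort_permE //; last exact: inj_comp inj_f (@perm_inj _ _).
rewrite /rank -[RHS](card_preimset _ (@perm_inj _ (tperm i j))).
by apply: eq_card => b; rewrite !inE.
Qed.

(* The signed permutation relating two rigid positions of equal profile is unique,
   and its sign is the sum of their orientations. *)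
Definition orientation p :=
  odd_perm (sort_perm (fun l => bar (p l))) (+) odd #|[set l | k.-1 < (val (p l)).*2]|.

Lemma orientation_flip p i : (bar (p i)).*2 != k.-1 -> orientation (flip i p) = ~~ orientation p.
Proof.
move=> nomid_i; rewrite /orientation (@sort_perm_ext _ (fun l => bar (p l))); last first.
  by move=> l; rewrite ffunE; case: ifP => // _; rewrite bar_rev.
rewrite (cardsD1 i [set l | _ < (val (flip i p l)).*2]) (cardsD1 i [set l | _ < (val (p l)).*2]).
have -> : [set l | k.-1 < (val (flip i p l)).*2] :\ i = [set l | k.-1 < (val (p l)).*2] :\ i.
  by apply/setP => l; rewrite !inE ffunE; case: eqP.
have -> : i \in [set l | k.-1 < (val (flip i p l)).*2] = (i \notin [set l | k.-1 < (val (p l)).*2]).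
  by rewrite !inE ffunE eqxx /=; move: nomid_i; rewrite /bar; have := ltn_ord (p i); lia.
by rewrite !oddD; case: (i \in _); case: (odd #|_|); case: (odd_perm _).
Qed.

Lemma orientation_psi p i j : rigid p -> i != j -> orientation (psi i j p) = orientation p.
Proof.
move=> rigid_p neq_ij; rewrite psiE orientation_flip; last by rewrite ffunE tpermL rigid_nomid.
rewrite /orientation (@sort_perm_ext _ ((fun l => bar (p l)) \o tperm i j)); last first.
  by move=> l; rewrite ffunE.
rewrite sort_perm_tperm; last exact: rigid_inj.
rewrite (odd_permM (tperm i j)) odd_tperm neq_ij.
have -> : #|[set l | k.-1 < (val (swap i j p l)).*2]| = #|[set l | k.-1 < (val (p l)).*2]|.
  rewrite -[RHS](card_preimset _ (@perm_inj _ (tperm i j))).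
  by apply: eq_card => l; rewrite !inE ffunE.
by rewrite addTb addNb negbK.
Qed.

Lemma connected_orientation p q : rigid p -> connected p q -> orientation q = orientation p.
Proof.
move=> rigid_p conn.
pose P r := perm_eq (profile p) (profile r) /\ orientation r = orientation p.
suff [] : P q by [].
apply: (connected_ind (P := P)) conn; first by split.
move=> r i j neq_ij [eq_pr orient_r]; split.
  by apply: perm_trans eq_pr _; rewrite perm_sym perm_profile_psi.
by rewrite orientation_psi // -(rigid_perm eq_pr).
Qed.

Lemma not_connected_flip p q i : rigid p -> ~ (connected p q /\ connected (flip i p) q).
Proof.
move=> rigid_p [conn conn_flip].
have rigid_flip : rigid (flip i p) by rewrite /rigid profile_flip.
have := connected_orientation rigid_flip conn_flip.
by rewrite (connected_orientation rigid_p conn) orientation_flip ?rigid_nomid //; case: orientation.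
Qed.

Lemma barseq_neq0 p : 0 \notin barseq p.
Proof.
by apply/mapP => -[l]; rewrite mem_filter mem_Bset => /andP [+ _] eq0; rewrite -eq0 eqxx.
Qed.

Lemma perm_profile p : perm_eq (profile p) (nseq #|Bset p| 0 ++ barseq p).
Proof.
have split_B : perm_eq (enum 'I_n)
    ([seq l <- enum 'I_n | l \in Bset p] ++ [seq l <- enum 'I_n | l \notin Bset p]).
  by rewrite perm_sym perm_filterC.
apply: perm_trans (perm_map _ split_B) _; rewrite map_cat perm_cat2r.
rewrite [X in perm_eq X](all_pred1P 0 _ _) ?size_map.
  by rewrite cardE enumT.
by apply/allP => c /mapP [l]; rewrite mem_filter mem_Bset => /andP [/eqP -> _] ->.
Qed.


Lemma mem_Tset p m js :
  0 \notin js -> (p \in Tset k n m js) = perm_eq (profile p) (nseq m 0 ++ js).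
Proof. by move=> js_pos; rewrite inE (permPl (perm_profile p)) perm_nseq_cat ?barseq_neq0. Qed.

Lemma card_Bset_count p : #|Bset p| = count_mem 0 (profile p).
Proof.
rewrite (seq.permP (perm_profile p)) count_cat count_nseq /= mul1n.
by rewrite (count_memPn (barseq_neq0 p)) addn0.
Qed.

Lemma Tparams_pos m js : Tparams k n m js -> 0 \notin js.
Proof. by case/and4P => _ _ _ /allP js_pos; apply/negP => /js_pos. Qed.

Lemma Tset_profile m js p q : Tparams k n m js -> p \in Tset k n m js ->
  (q \in Tset k n m js) = perm_eq (profile p) (profile q).
Proof.
move=> /Tparams_pos js_pos; rewrite !mem_Tset // => eq_p.
by rewrite [RHS]perm_sym (permPr eq_p).
Qed.

Lemma rigid_Tset m js p : 1 < k -> Tparams k n m js -> p \in Tset k n m js ->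
  rigid p = Tspecial k m js.
Proof.
move=> lt1k T_js; rewrite mem_Tset ?(Tparams_pos T_js) // => eq_p.
rewrite /rigid (perm_uniq eq_p) (perm_all _ eq_p).
have js_pos := Tparams_pos T_js; case/and4P: T_js => /andP [+ _] _ sorted_js /allP js_range.
case: m eq_p => [//|[|m]] _ _ /=; last by [].
rewrite /Tspecial /= js_pos ltn_sorted_uniq_leq sorted_js andbT.
have -> : 0.*2 != k.-1 by rewrite double0 eq_sym -lt0n -subn1 subn_gt0.
congr (_ && _); apply: eq_in_all => j /js_range.
by rewrite geq_half_double; lia.
Qed.

Lemma profile_nth p s : size s = n -> all (fun c => c.*2 <= k.-1) s ->
  (forall l, val (p l) = nth 0 s l) -> profile p = s.
Proof.
move=> size_s small_s p_s.
rewrite -[RHS](mkseq_nth 0) /mkseq size_s -val_enum_ord -map_comp.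
apply: eq_map => l /=; rewrite p_s bar_id //; apply: (allP small_s).
by rewrite mem_nth // size_s.
Qed.

Lemma Tset_nonempty m js : 0 < k -> Tparams k n m js -> exists p, p \in Tset k n m js.
Proof.
move=> k_pos T_js; pose s := nseq m 0 ++ js.
have js_pos := Tparams_pos T_js; case/and4P: T_js => /andP [_ le_mn] /eqP size_js _ /allP js_range.
have size_s : size s = n by rewrite size_cat size_nseq size_js subnKC.
have small_s : all (fun c => c.*2 <= k.-1) s.
  apply/allP => c; rewrite mem_cat => /orP [/nseqP [-> _] // | /js_range].
  by rewrite geq_half_double => /andP [].
pose p : pos := [ffun l : 'I_n => insubd (Ordinal k_pos) (nth 0 s l)].
exists p; rewrite mem_Tset // (@profile_nth _ s) // => l.
have /(allP small_s) : nth 0 s l \in s by rewrite mem_nth // size_s.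
by rewrite ffunE val_insubd; case: ltnP => //; lia.
Qed.

Lemma trivclass_unique p : exists! m : 'I_n.+1, p \in trivclass k n m.
Proof.
have le_Bn : #|Bset p| < n.+1 by rewrite ltnS -[X in _ <= X]card_ord max_card.
exists (Ordinal le_Bn); split => [|m]; first by rewrite inE.
by rewrite inE => /eqP eq_m; apply: val_inj.
Qed.

Lemma connected_card_Bset p q : connected p q -> #|Bset p| = #|Bset q|.
Proof. by move=> /connected_profile /seq.permP eq_pq; rewrite !card_Bset_count eq_pq. Qed.

Lemma Tset_cover p : external p -> exists m js, Tparams k n m js /\ p \in Tset k n m js.
Proof.
move=> ext_p; exists #|Bset p|, (sort leq (barseq p)).
split; last by rewrite inE eqxx perm_sym perm_sort perm_refl.
apply/and4P; split; last 1 first.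
- rewrite all_sort; apply/allP => j /mapP [l].
  rewrite mem_filter mem_Bset => /andP [bar_l _] ->.
  by rewrite lt0n bar_l bar_le_half.
- by rewrite card_gt0 -[X in _ <= X]card_ord max_card andbT.
- have := perm_size (perm_profile p).
  rewrite size_cat size_nseq size_map size_enum_ord size_sort => eq_n.
  apply/eqP/(@addnI #|Bset p|); rewrite subnKC; first exact/esym.
  by rewrite -[X in _ <= X]card_ord max_card.
- exact: (sort_sorted leq_total).
Qed.

Lemma Tset_params_unique m js m' js' p :
  Tparams k n m js -> Tparams k n m' js' ->
  p \in Tset k n m js -> p \in Tset k n m' js' -> m = m' /\ js = js'.
Proof.
case/and4P => _ _ sorted_js _; case/and4P => _ _ sorted_js' _.
rewrite !inE => /andP [/eqP <- eq_js] /andP [/eqP <- eq_js']; split => //.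
apply: (sorted_eq leq_trans anti_leq) => //.
by apply: perm_trans eq_js'; rewrite perm_sym.
Qed.

Lemma Tset_connected_class m js : 1 < k -> Tparams k n m js -> ~~ Tspecial k m js ->
  exists p, forall q, q \in Tset k n m js <-> connected p q.
Proof.
move=> lt1k T_js not_special; have [p T_p] := Tset_nonempty (ltnW lt1k) T_js.
exists p => q; rewrite (Tset_profile _ T_js T_p); split; last exact: connected_profile.
by apply: connected_of_profile; rewrite (rigid_Tset lt1k T_js T_p).
Qed.

Lemma Tset_special_classes m js p0 p1 :
  1 < k -> 0 < n -> Tparams k n m js -> Tspecial k m js ->
  (forall i : 'I_n, val (p0 i) = if val i == 0 then 0 else nth 0 js (val i).-1) ->
  (forall i : 'I_n, val (p1 i) = if val i == 0 then k.-1 else nth 0 js (val i).-1) ->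
  (forall q, q \in Tset k n m js <-> connected p0 q \/ connected p1 q) /\
  (forall q, ~ (connected p0 q /\ connected p1 q)).
Proof.
move=> lt1k n_pos T_js special p0E p1E; pose i0 : 'I_n := Ordinal n_pos.
have m1 : m = 1 by case/and3P: special => /eqP.
have T_p0 : p0 \in Tset k n m js.
  have js_pos := Tparams_pos T_js.
  case/and4P: T_js => /andP [_ le_mn] /eqP size_js _ /allP js_range.
  rewrite mem_Tset // m1 (@profile_nth _ (0 :: js)) //.
  - by rewrite /= size_js m1; lia.
  - by apply/allP => c /predU1P [-> // | /js_range]; rewrite geq_half_double => /andP [].
  - by move=> [[|l] lt_l]; rewrite p0E.
have -> : p1 = flip i0 p0.
  apply/ffunP => l; apply: val_inj; rewrite ffunE p1E.
  case: (eqVneq l i0) => [->|neq_l]; first by rewrite eqxx /= p0E /=; lia.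
  by rewrite p0E; case: l neq_l => [[|l] lt_l] //= /eqP []; apply: val_inj.
have rigid_p0 : rigid p0 by rewrite (rigid_Tset lt1k T_js T_p0).
split => q; last exact: not_connected_flip.
rewrite (Tset_profile q T_js T_p0); split; first exact: connected_or_flip.
by case=> /connected_profile //; rewrite profile_flip.
Qed.

End Cube.

Theorem mainTheorem1 (k n : nat) (hk : 2 <= k) (hn : 3 <= n) :
  (* (1) M^n is the disjoint union of the classes (m), 0 <= m <= n,
         and each (m) is a union of connectivity classes *)
  ((forall p : pos k n, exists! m : 'I_n.+1, p \in trivclass k n m) /\
   (forall p q : pos k n, connected p q -> #|Bset p| = #|Bset q|)) /\
  (* (2a) the T-sets cover the external positions ... *)
  (forall p : pos k n, external p ->
     exists m js, Tparams k n m js /\ p \in Tset k n m js) /\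
  (* ... and are pairwise disjoint *)
  (forall m js m' js' (p : pos k n), Tparams k n m js -> Tparams k n m' js' ->
     p \in Tset k n m js -> p \in Tset k n m' js' -> m = m' /\ js = js') /\
  (* (2b) non-exceptional T-sets are exactly one connectivity class *)
  (forall m js, Tparams k n m js -> ~~ Tspecial k m js ->
     exists p : pos k n, forall q, q \in Tset k n m js <-> connected p q) /\
  (* (2c) exceptional T-sets are the union of exactly two classes: those of
     p0 = (0, j_1, ..., j_{n-1}) and p1 = (k-1, j_1, ..., j_{n-1}) *)
  (forall m js, Tparams k n m js -> Tspecial k m js ->
     forall p0 p1 : pos k n,
       (forall i : 'I_n, val (p0 i) = if val i == 0 then 0 else nth 0 js (val i).-1) ->
       (forall i : 'I_n, val (p1 i) = if val i == 0 then k.-1 else nth 0 js (val i).-1) ->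
       (forall q, q \in Tset k n m js <-> connected p0 q \/ connected p1 q) /\
       (forall q, ~ (connected p0 q /\ connected p1 q))) /\
  (* (3) strictly increasing 1 <= j_1 < ... < j_{n-1} < (k-1)/2 exist only if k >= 2n *)
  (forall js : seq nat, size js = n.-1 -> sorted ltn js ->
     all (fun j => 1 <= j) js -> all (fun j => j.*2 < k.-1) js -> n.*2 <= k).
Proof.
have n_pos : 0 < n by apply: leq_trans hn.
split; first by split; [exact: trivclass_unique | exact: connected_card_Bset].
split; first exact: Tset_cover.
split; first exact: Tset_params_unique.
split; first by move=> m js; exact: Tset_connected_class.
split; first by move=> m js T_js special p0 p1; exact: Tset_special_classes.
move=> js size_js /(sorted_uniq ltn_trans ltnn) uniq_js.
by apply: special_params_bound; first exact: leq_trans hn.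
Qed.
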